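(* Let $A$ be the adjacency matrix (entries in $\{0,1\}$, $A_{ij}=1$ iff there is an edge from $j$ to $i$) of a directed graph with $N$ vertices and $M\ge 1$ edges. Let $k_{\max}$ be the maximum among all in-degrees $k_i^{\mathrm{in}}=\sum_j A_{ij}$ and out-degrees $k_j^{\mathrm{out}}=\sum_i A_{ij}$ of the graph. Then \[\mathrm{srank}(A)\le \frac{M}{k_{\max}}.\]
   Context: The stable rank of a nonzero matrix $A$ is $\mathrm{srank}(A)=\|A\|_F^2/\|A\|_2^2=\sum_i\sigma_i^2/\sigma_1^2$, where $\sigma_1\ge\sigma_2\ge\cdots$ are the singular values of $A$, $\|\cdot\|_F$ is the Frobenius norm and $\|\cdot\|_2$ the spectral norm. *)

From HB Require Import structures.
From mathcomp Require Import all_boot all_order all_algebra.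
From mathcomp Require Import classical_sets reals.
Set Implicit Arguments. Unset Strict Implicit. Unset Printing Implicit Defensive.
Import Order.TTheory GRing.Theory Num.Theory.
Local Open Scope classical_set_scope.
Local Open Scope ring_scope.

Definition vnorm (R : realType) (n : nat) (x : 'cV[R]_n) : R :=
  Num.sqrt (\sum_(i < n) x i 0 ^+ 2).

Definition frob2 (R : realType) (m n : nat) (A : 'M[R]_(m, n)) : R :=
  \sum_(i < m) \sum_(j < n) A i j ^+ 2.

(* spectral norm = largest singular value = operator norm induced by the
   Euclidean norm *)
Definition specnorm (R : realType) (m n : nat) (A : 'M[R]_(m, n)) : R :=
  sup [set vnorm (A *m x) | x in [set x : 'cV[R]_n | vnorm x = 1]].

Definition srank (R : realType) (m n : nat) (A : 'M[R]_(m, n)) : R :=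
  frob2 A / specnorm A ^+ 2.

(* Directed graph on vertices 'I_N given by an edge relation:
   E j i means there is an edge from j to i. *)
Definition adjmx (R : realType) (N : nat) (E : rel 'I_N) : 'M[R]_N :=
  \matrix_(i, j) (E j i)%:R.

Definition nedges (N : nat) (E : rel 'I_N) : nat :=
  #|[set p : 'I_N * 'I_N | E p.1 p.2]|.

Definition indeg (N : nat) (E : rel 'I_N) (i : 'I_N) : nat := #|[set j | E j i]|.
Definition outdeg (N : nat) (E : rel 'I_N) (j : 'I_N) : nat := #|[set i | E j i]|.

Definition kmax (N : nat) (E : rel 'I_N) : nat :=
  maxn (\max_(i < N) indeg E i) (\max_(j < N) outdeg E j).

From HB Require Import structures.
From mathcomp Require Import all_boot all_order all_algebra.
From mathcomp Require Import classical_sets reals.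
Import Order.TTheory GRing.Theory Num.Theory.
Local Open Scope ring_scope.

(* The Frobenius norm of a 0/1 matrix counts its nonzero entries, so
   frob2 A = M.  The spectral norm dominates |A x| for every unit vector x:
   the basis vector e_j gives |A e_j|^2 = k_j^out, and the normalised
   indicator of the in-neighbours of i gives (A x)_i = sqrt (k_i^in).
   Hence specnorm(A)^2 >= k_max and srank A = M / specnorm(A)^2 <= M / k_max. *)

Lemma sqr_natr_bool (R : pzSemiRingType) (b : bool) : (b%:R : R) ^+ 2 = b%:R.
Proof. by case: b; rewrite ?expr1n ?expr0n. Qed.

Lemma in_set_boolE (T : Type) (f : T -> bool) (x : T) :
  (x \in [set y | f y]%classic) = f x.
Proof. by apply/idP/idP; rewrite in_setE. Qed.

Lemma sum_natr_bool (R : pzSemiRingType) (T : finType) (f : T -> bool) :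
  \sum_(x : T) (f x)%:R = #|[set x | f x]%classic|%:R :> R.
Proof.
rewrite -sum1_card natr_sum [RHS]big_mkcond /=; apply: eq_bigr => x _.
by rewrite in_set_boolE; case: (f x).
Qed.

Lemma natr_bigmax_le (R : realDomainType) (I : finType) (F : I -> nat) (c : R) :
  0 <= c -> (forall i, (F i)%:R <= c) -> (\max_i F i)%:R <= c.
Proof.
move=> c_ge0 F_le; elim/big_ind: _ => // a b.
by rewrite natr_max ge_max => -> ->.
Qed.

Section EuclideanNorm.
Context {R : realType} {n : nat}.
Implicit Types x : 'cV[R]_n.

Lemma vnorm_ge0 x : 0 <= vnorm x.
Proof. exact: sqrtr_ge0. Qed.

Lemma vnorm_sqr x : vnorm x ^+ 2 = \sum_i x i 0 ^+ 2.
Proof. by rewrite sqr_sqrtr // sumr_ge0 // => i _; exact: sqr_ge0. Qed.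

Lemma sqr_coord_le_vnorm x i : x i 0 ^+ 2 <= vnorm x ^+ 2.
Proof.
by rewrite vnorm_sqr (bigD1 i) //= lerDl sumr_ge0 // => j _; exact: sqr_ge0.
Qed.

Lemma norm_coord_le_vnorm x i : `|x i 0| <= vnorm x.
Proof.
by rewrite -ler_sqr ?nnegrE ?vnorm_ge0 // real_normK ?num_real ?sqr_coord_le_vnorm.
Qed.

End EuclideanNorm.

Section SpectralNorm.
Context {R : realType} {m n : nat}.
Variable A : 'M[R]_(m, n).

Lemma has_ubound_vnorm_mulmx :
  has_ubound [set vnorm (A *m x) | x in [set x : 'cV[R]_n | vnorm x = 1]].
Proof.
exists (Num.sqrt (\sum_i (\sum_j `|A i j|) ^+ 2)) => _ [x /= x1 <-].
rewrite ler_sqrt; last by apply: sumr_ge0 => i _; exact: sqr_ge0.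
apply: ler_sum => i _; rewrite mxE -real_normK ?num_real //.
rewrite ler_sqr ?nnegrE ?normr_ge0 ?sumr_ge0 //.
apply: le_trans (ler_norm_sum _ _ _) _; apply: ler_sum => j _.
rewrite normrM -[leRHS]mulr1 ler_wpM2l //.
by rewrite -x1 norm_coord_le_vnorm.
Qed.

Lemma vnorm_mulmx_le_specnorm x : vnorm x = 1 -> vnorm (A *m x) <= specnorm A.
Proof. by move=> x1; apply: ub_le_sup; [exact: has_ubound_vnorm_mulmx | exists x]. Qed.

Lemma sqr_vnorm_mulmx_le_specnorm x :
  vnorm x = 1 -> vnorm (A *m x) ^+ 2 <= specnorm A ^+ 2.
Proof.
move=> /vnorm_mulmx_le_specnorm Ax_le.
by apply: lerXn2r; rewrite // nnegrE ?vnorm_ge0 // (le_trans (vnorm_ge0 _) Ax_le).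
Qed.

End SpectralNorm.

Section AdjacencyMatrix.
Variable R : realType.
Context {N : nat}.
Variable E : rel 'I_N.
Local Notation A := (adjmx R E).

Lemma frob2_adjmx : frob2 A = (nedges E)%:R.
Proof.
rewrite /frob2 exchange_big pair_bigA /= /nedges -sum_natr_bool.
by apply: eq_bigr => p _; rewrite mxE sqr_natr_bool.
Qed.

Lemma outdeg_le_specnorm j : (outdeg E j)%:R <= specnorm A ^+ 2.
Proof.
pose e : 'cV[R]_N := \col_i (i == j)%:R.
have e1 : vnorm e = 1.
  rewrite /vnorm (bigD1 j) //= big1 ?mxE ?eqxx ?expr1n ?addr0 ?sqrtr1 //.
  by move=> i /negPf ij; rewrite mxE ij expr0n.
suff -> : (outdeg E j)%:R = vnorm (A *m e) ^+ 2.
  exact: sqr_vnorm_mulmx_le_specnorm.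
rewrite vnorm_sqr /outdeg -sum_natr_bool; apply: eq_bigr => i _.
rewrite mxE (bigD1 j) //= big1 => [|k /negPf kj].
  by rewrite !mxE eqxx mulr1 addr0 sqr_natr_bool.
by rewrite !mxE kj mulr0.
Qed.

Lemma indeg_le_specnorm i : (indeg E i)%:R <= specnorm A ^+ 2.
Proof.
set k : R := (indeg E i)%:R.
have [k0|k_gt0] := eqVneq k 0; first by rewrite k0 sqr_ge0.
have {k_gt0} k_gt0 : 0 < k by rewrite lt0r k_gt0 ler0n.
have sum_row : \sum_j ((E j i)%:R : R) = k by rewrite sum_natr_bool.
pose x : 'cV[R]_N := \col_j ((E j i)%:R / Num.sqrt k).
have x1 : vnorm x = 1.
  rewrite /vnorm -sqrtr1; congr Num.sqrt.
  under eq_bigr do rewrite mxE expr_div_n sqr_natr_bool sqr_sqrtr ?ltW //.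
  by rewrite -mulr_suml sum_row divff // gt_eqF.
have Axi : (A *m x) i 0 = Num.sqrt k.
  rewrite mxE; under eq_bigr do rewrite !mxE mulrA -expr2 sqr_natr_bool.
  rewrite -mulr_suml sum_row -{1}(sqr_sqrtr (ltW k_gt0)) expr2 mulfK //.
  by rewrite sqrtr_eq0 -ltNge.
rewrite -(sqr_sqrtr (ltW k_gt0)) -Axi; apply: le_trans (sqr_coord_le_vnorm _ i) _.
exact: sqr_vnorm_mulmx_le_specnorm.
Qed.

Lemma kmax_le_specnorm : (kmax E)%:R <= specnorm A ^+ 2.
Proof.
rewrite /kmax natr_max ge_max !natr_bigmax_le ?sqr_ge0 // => v.
  exact: outdeg_le_specnorm.
exact: indeg_le_specnorm.
Qed.

Lemma kmax_gt0 : (0 < nedges E)%N -> (0 < kmax E)%N.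
Proof.
case/card_gt0P=> -[j i]; rewrite in_set_boolE /= => Eji.
apply: leq_trans (leq_maxr _ _); apply: leq_trans (leq_bigmax j).
by apply/card_gt0P; exists i; rewrite in_set_boolE.
Qed.

End AdjacencyMatrix.

Theorem propositionS16 (R : realType) (N : nat) (E : rel 'I_N) :
  (1 <= nedges E)%N ->
  srank (adjmx R E) <= (nedges E)%:R / (kmax E)%:R.
Proof.
move=> /kmax_gt0 kmax_gt0; have kmax_le := kmax_le_specnorm R E.
rewrite /srank frob2_adjmx ler_wpM2l // lef_pV2 ?posrE ?ltr0n //.
by apply: lt_le_trans kmax_le; rewrite ltr0n.
Qed.
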